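(* If $G$ is a fullerene, then $\mathrm{GP}(G)$ is an integer.
   Context: All graphs are simple and finite. For a connected graph $G$, $d_G(u,v)$ denotes the shortest-path distance and $\mathrm{Aut}(G)$ the automorphism group. The Graovac-Pisanski index is $$\mathrm{GP}(G)=\frac{|V(G)|}{2|\mathrm{Aut}(G)|}\sum_{u\in V(G)}\sum_{\alpha\in \mathrm{Aut}(G)} d_G(u,\alpha(u)).$$ A fullerene is a 3-connected 3-regular plane graph in which every face is bounded by a pentagon or a hexagon. *)

From HB Require Import structures.
From mathcomp Require Import all_boot all_order all_algebra all_fingroup.
Set Implicit Arguments. Unset Strict Implicit. Unset Printing Implicit Defensive.
Import Order.TTheory GRing.Theory Num.Theory.

Definition simple_graph (V : finType) (e : rel V) : Prop :=
  symmetric e /\ irreflexive e.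

Definition walk_n (V : finType) (e : rel V) (n : nat) (u v : V) : bool :=
  [exists p : n.-tuple V, path e u p && (last u p == v)].

(* shortest-path distance (correct for connected graphs: shortest
   paths have length < #|V|) *)
Definition dist (V : finType) (e : rel V) (u v : V) : nat :=
  find (fun n => walk_n e n u v) (iota 0 #|V|).

Definition connected (V : finType) (e : rel V) : Prop :=
  forall u v : V, connect e u v.

Definition is_aut (V : finType) (e : rel V) (s : {perm V}) : bool :=
  [forall x, forall y, e (s x) (s y) == e x y].

Definition Aut (V : finType) (e : rel V) : {set {perm V}} :=
  [set s | is_aut e s].

Definition GP (V : finType) (e : rel V) : rat :=
  ((#|V|)%:R / (2 * #|Aut e|)%:R) *
  (\sum_(u : V) \sum_(a in Aut e) dist e u (a u))%:R.

Definition k_connected (V : finType) (e : rel V) (k : nat) : Prop :=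
  k < #|V| /\
  forall S : {set V}, #|S| < k ->
    forall x y, x \notin S -> y \notin S ->
      connect [rel a b | [&& e a b, a \notin S & b \notin S]] x y.

Definition cubic (V : finType) (e : rel V) : Prop :=
  forall v : V, #|[set w | e v w]| = 3.

Definition dart (V : finType) (e : rel V) : finType :=
  {d : V * V | e d.1 d.2 && e d.2 d.1}.

Lemma dart_rev_proof (V : finType) (e : rel V) (d : dart e) :
  e (val d).2 (val d).1 && e (val d).1 (val d).2.
Proof. by case: d => [[a b]] /= /andP[-> ->]. Qed.

Definition dart_rev (V : finType) (e : rel V) (d : dart e) : dart e :=
  exist _ ((val d).2, (val d).1) (dart_rev_proof d).

Lemma dart_revK (V : finType) (e : rel V) : involutive (@dart_rev V e).
Proof. by case=> [[a b] p]; apply: val_inj. Qed.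

Definition rev_perm (V : finType) (e : rel V) : {perm dart e} :=
  perm (inv_inj (@dart_revK V e)).

(* Face permutation of a rotation system rho: d |-> rho (rev d). *)
Definition face_perm (V : finType) (e : rel V) (rho : {perm dart e}) :
  {perm dart e} := (rev_perm e * rho)%g.

Definition rotation_system (V : finType) (e : rel V) (rho : {perm dart e}) :
  Prop :=
  forall d : dart e, porbit rho d = [set d' | (val d').1 == (val d).1].

(* Plane embedding (combinatorial map of genus 0): a rotation system
   satisfying Euler's formula V - E + F = 2, with #darts = 2E. *)
Definition spherical (V : finType) (e : rel V) (rho : {perm dart e}) : Prop :=
  rotation_system rho /\
  (2 * #|V| + 2 * #|porbits (face_perm rho)| = #|dart e| + 4)%N.

Definition fullerene (V : finType) (e : rel V) : Prop :=
  simple_graph e /\ k_connected e 3 /\ cubic e /\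
  exists rho : {perm dart e}, spherical rho /\
    forall d : dart e, #|porbit (face_perm rho) d| \in [:: 5; 6]%N.

From Pilot Require Import Defs.
From HB Require Import structures.
From mathcomp Require Import all_boot all_order all_algebra all_fingroup.
From mathcomp Require Import ring.
Set Implicit Arguments. Unset Strict Implicit. Unset Printing Implicit Defensive.

(* Two facts suffice.  First, for a finite group G acting on a finite set and
   a G-invariant weight f, |G| divides sum_u sum_(a in G) f(u, a u): the inner
   sum is constant on an orbit O and equals |Stab u| * sum_(v in O) f(u, v),
   so O contributes |O| |Stab u| = |G| times an integer.  Applied to the
   distance and the automorphism group, this makes the double sum in GP a
   multiple of |Aut|.  Second, a fullerene has an even number of vertices:
   3|V| is the number of darts, which Euler's formula makes even.  This
   absorbs the remaining factor 2. *)

Section InvariantWeight.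

Variables (gT : finGroupType) (T : finType) (to : {action gT &-> T}).
Variables (G : {group gT}) (f : T -> T -> nat).
Hypothesis f_act : forall u v b, b \in G -> f (to u b) (to v b) = f u v.

Lemma sum_act_stab u :
  \sum_(a in G) f u (to u a) =
    #|'C_G[u | to]%g| * \sum_(v in orbit to G u) f u v.
Proof.
rewrite (partition_big (to u) (mem (orbit to G u))) => [|a]; last exact: mem_orbit.
rewrite big_distrr /=; apply: eq_bigr => _ /orbitP[b Gb <-].
rewrite (eq_big [in amove to G u (to u b)] (fun=> f u (to u b))) => [|a|a /andP[_ /eqP -> //]].
- by rewrite sum_nat_const amove_act ?subsetT // card_rcoset.
- by rewrite /amove !inE.
Qed.

Lemma sum_act_orbit u b : b \in G ->
  \sum_(a in G) f (to u b) (to (to u b) a) = \sum_(a in G) f u (to u a).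
Proof.
move=> Gb; rewrite (reindex (conjg^~ b)) /=; last first.
  by exists (conjg^~ b^-1%g) => c _; rewrite ?conjgK ?conjgKV.
apply: eq_big => [c|c _]; first by rewrite groupJr.
by rewrite -actM /conjg mulKVg actM f_act.
Qed.

Lemma card_group_dvd_sum_act : #|G| %| \sum_u \sum_(a in G) f u (to u a).
Proof.
rewrite (partition_big_imset (orbit to G)) /=.
apply: dvdn_sum => _ /imsetP[w _ ->].
rewrite (eq_big [in orbit to G w] (fun=> \sum_(a in G) f w (to w a))) => [|u|u /eqP Ouw].
- by rewrite sum_nat_const sum_act_stab mulnA card_orbit_stab dvdn_mulr.
- by rewrite (sameP eqP orbit_eqP).
- have /orbitP[b Gb <-] : u \in orbit to G w by rewrite -Ouw orbit_refl.
  exact: sum_act_orbit.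
Qed.

End InvariantWeight.

Section GraphAutomorphisms.

Variables (V : finType) (e : rel V).

Lemma is_autP (s : {perm V}) :
  reflect (forall x y, e (s x) (s y) = e x y) (is_aut e s).
Proof.
apply: (iffP forallP) => [He x y|He x]; first by apply/eqP; move/forallP: (He x).
by apply/forallP => y; rewrite He.
Qed.

Lemma Aut_group_set : group_set (Defs.Aut e).
Proof.
apply/group_setP; split; first by rewrite inE; apply/is_autP => x y; rewrite !perm1.
move=> a b; rewrite !inE => /is_autP Ha /is_autP Hb; apply/is_autP => x y.
by rewrite !permM Hb Ha.
Qed.

Canonical Aut_group := group Aut_group_set.

Lemma walk_n_aut (a : {perm V}) n u v : a \in Defs.Aut e ->
  walk_n e n u v -> walk_n e n (a u) (a v).
Proof.
rewrite inE => /is_autP Ha /existsP[p /andP[ep /eqP lp]].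
apply/existsP; exists (map_tuple a p) => /=.
by rewrite path_map last_map lp eqxx andbT (eq_path (e' := e)).
Qed.

Lemma dist_aut (a : {perm V}) u v :
  a \in Defs.Aut e -> dist e (a u) (a v) = dist e u v.
Proof.
move=> Aa; apply: eq_find => n /=; apply/idP/idP; last exact: walk_n_aut.
have Aa' : a^-1%g \in Aut_group by rewrite groupV.
by move=> /(walk_n_aut Aa'); rewrite !permK.
Qed.

Lemma card_Aut_dvd_sum_dist :
  #|Defs.Aut e| %| \sum_u \sum_(a in Defs.Aut e) dist e u (a u).
Proof.
exact: (@card_group_dvd_sum_act _ _ 'P Aut_group _ (fun u v b _ => dist_aut u v _)).
Qed.

End GraphAutomorphisms.

Lemma card_dart (V : finType) (e : rel V) :
  symmetric e -> cubic e -> #|dart e| = 3 * #|V|.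
Proof.
move=> se cu; rewrite card_sig -sum1_card.
rewrite -(pair_big_dep xpredT (fun x y => e x y && e y x) (fun _ _ => 1)) /=.
rewrite (eq_bigr (fun=> 3)) => [|x _]; first by rewrite sum_nat_const mulnC cardT.
by rewrite -(cu x) -sum1_card; apply: eq_bigl => y; rewrite inE (se y x) andbb.
Qed.

Lemma fullerene_card_even (V : finType) (e : rel V) : fullerene e -> ~~ odd #|V|.
Proof.
case=> [[se _] [_ [cu [rho [[_ Euler] _]]]]].
have : ~~ odd (2 * #|V| + 2 * #|porbits (face_perm rho)|) by rewrite oddD !oddM.
by rewrite Euler card_dart // oddD oddM addbF.
Qed.

Import GRing.Theory Num.Theory.

Theorem proposition3p5 (V : finType) (e : rel V) :
  fullerene e -> exists z : int, GP e = (z%:~R)%R.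
Proof.
move=> fe; have /dvdnP[k sumE] := card_Aut_dvd_sum_dist e.
have cardV : #|V| = 2 * #|V|./2.
  by rewrite -{1}(odd_double_half #|V|) (negbTE (fullerene_card_even fe)) -mul2n.
have Aut_neq0 : (#|Defs.Aut e|%:R : rat)%R != 0%R.
  by rewrite pnatr_eq0 -lt0n (cardG_gt0 (Aut_group e)).
exists (Posz (#|V|./2 * k)); rewrite /GP sumE {1}cardV.
rewrite -[RHS]/(((#|V|./2 * k)%N%:R : rat)%R) !natrM.
by move: Aut_neq0; move: (#|Defs.Aut e|%:R)%R (#|V|./2%:R)%R (k%:R)%R => A m n A0; field.
Qed.
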